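(* Under the setting and assumptions in the context (in particular $\lambda_t=c\,e^{-\gamma t}$ with $0<c<1$, $\gamma>0$, the state bound $|x_i(t)|\le\eta$, informative trust observations $E_{\mathcal L}>0>E_{\mathcal M}$, and connectedness of the subgraph induced by the legitimate agents), almost surely the legitimate agents' states converge to a common finite value: there exist almost surely finite random vectors $\tilde x^{\mathcal L},\tilde x^{\mathcal M}\in\mathbb R^{L}$ such that $$\lim_{t\to\infty} x^{\mathcal L}(t)=\mathbf 1\, v^\top(\tilde x^{\mathcal L}+\tilde x^{\mathcal M}),$$ where $v$ is the stochastic vector with $(\overline W^{\mathcal L})^{\infty}=\mathbf 1 v^\top$. Explicitly, writing $P^{\lambda}_{k_0}=\prod_{k=\max\{k_0,T_f\}}^{\infty}(1-\lambda_k)$ and $Q_{k_0}=\prod_{k=k_0}^{\max\{k_0,T_f\}-1}(1-\lambda_k)W^{\mathcal L}_k$ (ordered product, later factors on the left; empty product $=I$), one has $\tilde x^{\mathcal L}=P^{\lambda}_0Q_0x^{\mathcal L}(0)+\sum_{k=0}^{\infty}P^{\lambda}_{k+1}Q_{k+1}\lambda_k x^{\mathcal L}(0)$ and $\tilde x^{\mathcal M}=\sum_{k=0}^{T_f-1}P^{\lambda}_{k+1}Q_{k+1}(1-\lambda_k)W^{\mathcal M}_k x^{\mathcal M}(k)$.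
   Context: Agents $\mathcal V=\{1,\dots,N\}$ communicate over a fixed graph $\mathcal G=(\mathcal V,\mathcal E)$; $(i,j)\in\mathcal E$ means $j$ can send data to $i$, and $\mathcal N_i=\{j\in\mathcal V:(i,j)\in\mathcal E\}$ (with $i\notin\mathcal N_i$). Legitimate agents are $\mathcal L=\{1,\dots,L\}$, malicious agents $\mathcal M=\{L+1,\dots,N\}$, $M=N-L$. The subgraph induced by $\mathcal L$ is connected. $x_i(t)\in\mathbb R$ is agent $i$'s state, $x^{\mathcal L}(t)\in\mathbb R^L$, $x^{\mathcal M}(t)\in\mathbb R^M$ the stacked states; malicious states evolve arbitrarily. State bound: $\max_{i\in\mathcal V,t\ge0}|x_i(t)|\le\eta$. Nominal matrix $\overline W^{\mathcal L}\in\mathbb R^{L\times L}$: $[\overline W^{\mathcal L}]_{ij}=1/(|\mathcal N_i\cap\mathcal L|+1)$ if $j\in\mathcal N_i\cap\mathcal L$, $0$ if $j\notin\mathcal N_i\cup\{i\}$, and $[\overline W^{\mathcal L}]_{ii}=1-\sum_{j\in\mathcal N_i\cap\mathcal L}[\overline W^{\mathcal L}]_{ij}$. It is primitive and $(\overline W^{\mathcal L})^\infty=\mathbf 1v^\top$ for a stochastic vector $v$. Trust: for each $i\in\mathcal L$, $j\in\mathcal N_i$, $t\ge0$ an observation $\alpha_{ij}(t)\in[0,1]$ is available; for each pair the $\alpha_{ij}(t)$, $t\ge0$, are independent with a common mean, and $E_{\mathcal L}=\mathbb E[\alpha_{ij}]-1/2$ if $j\in\mathcal L$, $E_{\mathcal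 M}=\mathbb E[\alpha_{ij}]-1/2$ if $j\in\mathcal M$; assume $E_{\mathcal L}>0$, $E_{\mathcal M}<0$. Let $\beta_{ij}(t)=\sum_{s=0}^t(\alpha_{ij}(s)-1/2)$ and $\mathcal N_i(t)=\{j\in\mathcal N_i:\beta_{ij}(t)\ge0\}$. Weights: $w_{ij}(t)=1/(|\mathcal N_i(t)|+1)$ if $j\in\mathcal N_i(t)$, $0$ if $j\notin\mathcal N_i(t)\cup\{i\}$, $w_{ii}(t)=1-\sum_{j\in\mathcal N_i}w_{ij}(t)$. Protocol for $i\in\mathcal L$, $t\ge0$: $x_i(t+1)=\lambda_t x_i(0)+(1-\lambda_t)\sum_{j\in\mathcal N_i\cup\{i\}}w_{ij}(t)x_j(t)$, with $\lambda_t=c\,e^{-\gamma t}$, $0<c<1$, $\gamma>0$. $W^{\mathcal L}_t=[w_{ij}(t)]_{i,j\in\mathcal L}$, $W^{\mathcal M}_t=[w_{ij}(t)]_{i\in\mathcal L,j\in\mathcal M}$. $T_f$ is the (random) smallest time such that $W^{\mathcal L}_t=\overline W^{\mathcal L}$ for all $t\ge T_f$; it is finite almost surely. *)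

From HB Require Import structures.
From mathcomp Require Import all_boot all_order all_algebra.
From mathcomp Require Import all_classical all_reals all_analysis.
Set Implicit Arguments. Unset Strict Implicit. Unset Printing Implicit Defensive.
Import Order.TTheory GRing.Theory Num.Theory.
Import numFieldNormedType.Exports.
Local Open Scope classical_set_scope.
Local Open Scope ring_scope.

(* Agents are 'I_(L + M): legitimate agent i : 'I_L is [lshift M i],
   malicious agent j : 'I_M is [rshift L j].
   E i j (boolean) means (i,j) is an edge, i.e. j can send data to i. *)

Section Defs.
Variable R : realType.
Variables L M : nat.
Notation N := (L + M)%N.
Variable E : rel 'I_N.

Definition legit (i : 'I_L) : 'I_N := lshift M i.
Definition malic (j : 'I_M) : 'I_N := rshift L j.

Definition Erel_L : rel 'I_L := fun i j => E (legit i) (legit j).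

Definition nbL (i : 'I_L) : nat := #|[set j : 'I_L | E (legit i) (legit j)]|.

Definition Wbar : 'M[R]_L :=
  \matrix_(i < L, j < L)
    if j == i then 1 - \sum_(k : 'I_L | E (legit i) (legit k)) 1 / (nbL i).+1%:R
    else if E (legit i) (legit j) then 1 / (nbL i).+1%:R else 0.

Definition lam (c gamma : R) (t : nat) : R := c * expR (- (gamma * t%:R)).

Definition beta (a : nat -> R) (t : nat) : R := \sum_(0 <= s < t.+1) (a s - 1/2).

Section Path.
(* one sample path of the trust observations: al i j t = alpha_ij(t) *)
Variable al : 'I_L -> 'I_N -> nat -> R.

Definition Ntr (i : 'I_L) (t : nat) : {set 'I_N} :=
  [set j : 'I_N | E (legit i) j && (0 <= beta (al i j) t)].

Definition wgt_off (i : 'I_L) (j : 'I_N) (t : nat) : R :=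
  if j \in Ntr i t then 1 / (#|Ntr i t|).+1%:R else 0.

Definition wgt (i : 'I_L) (j : 'I_N) (t : nat) : R :=
  if j == legit i then 1 - \sum_(k : 'I_N | E (legit i) k) wgt_off i k t
  else wgt_off i j t.

Definition WL (t : nat) : 'M[R]_L := \matrix_(i < L, j < L) wgt i (legit j) t.
Definition WM (t : nat) : 'M[R]_(L, M) := \matrix_(i < L, j < M) wgt i (malic j) t.

Definition stable_from (T : nat) : Prop := forall t, (T <= t)%N -> WL t = Wbar.
Definition is_Tf (T : nat) : Prop :=
  stable_from T /\ forall T', stable_from T' -> (T <= T')%N.

Variables (c gamma : R) (Tf : nat).

Fixpoint Qprod (k0 n : nat) : 'M[R]_L :=
  match n with
  | 0 => 1%:M
  | n'.+1 => if (k0 <= n')%N then ((1 - lam c gamma n') *: WL n') *m Qprod k0 n'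
             else 1%:M
  end.

Definition Q (k0 : nat) : 'M[R]_L := Qprod k0 (maxn k0 Tf).

Definition Ppart (k0 n : nat) : R := \prod_(maxn k0 Tf <= k < n) (1 - lam c gamma k).
Definition Plam (k0 : nat) : R := limn (Ppart k0).

Variable xL0 : 'cV[R]_L.
Variable xM : nat -> 'cV[R]_M.

Definition xLterm (i : 'I_L) (k : nat) : R :=
  Plam k.+1 * lam c gamma k * (Q k.+1 *m xL0) i ord0.

Definition xtildeL (i : 'I_L) : R :=
  Plam 0 * (Q 0 *m xL0) i ord0 + limn (series (xLterm i)).

Definition xtildeM (i : 'I_L) : R :=
  \sum_(0 <= k < Tf)
    (Plam k.+1 * (1 - lam c gamma k) * (Q k.+1 *m (WM k *m xM k)) i ord0).

End Path.

End Defs.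

Definition indep_seq d (T : measurableType d) (R : realType)
    (P : probability T R) (X : nat -> T -> R) : Prop :=
  forall (s : seq nat) (B : nat -> set R),
    uniq s -> (forall n, measurable (B n)) ->
    P (\bigcap_(n in [set` s]) (X n @^-1` B n)) =
    (\prod_(n <- s) P (X n @^-1` B n))%E.

(* The argument is pathwise.  Once [W^L_t] equals the nominal matrix, the
   diagonal entries show that no weight is left on malicious neighbours, so from
   [T_f] on the recursion reads x(t+1) = lambda_t x(0) + (1 - lambda_t) Wbar x(t).
   Unrolling it writes x(T_f + n) through Wbar^n x(T_f) and the terms
   lambda_(T_f+k) Wbar^(n-k-1) x(0); since Wbar^n --> 1 v^T and the lambda_k are
   summable, Tannery's theorem passes the limit through the sum.  Unrolling the
   first T_f steps as well identifies the limit with v^T (xtildeL + xtildeM). *)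

From HB Require Import structures.
From mathcomp Require Import all_boot all_order all_algebra.
From mathcomp Require Import all_classical all_reals all_analysis.
From mathcomp Require Import ring lra.

Set Implicit Arguments.
Unset Strict Implicit.
Unset Printing Implicit Defensive.

Import Order.TTheory GRing.Theory Num.Theory.
Import numFieldNormedType.Exports.
Local Open Scope classical_set_scope.
Local Open Scope ring_scope.

Section series_facts.
Variable R : realType.
Implicit Types (u a b : R ^nat).

Lemma cvgn_sum (I : eqType) (r : seq I) (P : pred I) (F : I -> R ^nat) (l : I -> R) :
  (forall i, F i @ \oo --> l i) ->
  (fun n => \sum_(i <- r | P i) F i n) @ \oo --> \sum_(i <- r | P i) l i.
Proof. by move=> Fl; apply: cvg_big => //; exact: add_continuous. Qed.

Lemma series_shiftn u N n :
  series (fun k => u (k + N)%N) n = series u (n + N)%N - series u N.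
Proof.
by rewrite series_addn addrC addKr /series /= -[in RHS](add0n N) big_addn addnK.
Qed.

Lemma cvg_series_shiftn u N : cvgn (series u) ->
  series (fun k => u (k + N)%N) @ \oo --> limn (series u) - series u N.
Proof.
move=> cu; under eq_cvg do rewrite series_shiftn.
by apply: cvgB; [rewrite (cvg_shiftn N (series u)) | exact: cvg_cst].
Qed.

Lemma is_cvg_series_unshiftn u N :
  cvgn (series (fun k => u (k + N)%N)) -> cvgn (series u).
Proof.
move=> cu; apply/cvg_ex; exists (limn (series (fun k => u (k + N)%N)) + series u N).
rewrite -(cvg_shiftn N).
have -> : [sequence series u (n + N)%N]_n =
          (fun n => series (fun k => u (k + N)%N) n + series u N).
  by apply: funext => n; rewrite series_shiftn subrK.
by apply: cvgD => //; exact: cvg_cst.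
Qed.

Lemma lim_series_shiftn u N : cvgn (series u) ->
  limn (series u) = series u N + limn (series (fun k => u (k + N)%N)).
Proof. by move=> cu; rewrite (cvg_lim _ (@cvg_series_shiftn _ N cu)) // addrC subrK. Qed.

Lemma is_cvg_series_dom u b :
  (forall k, `|u k| <= b k) -> cvgn (series b) -> cvgn (series u).
Proof.
move=> ub cb; apply: normed_cvg; apply: (series_le_cvg _ _ ub cb) => k //.
exact: le_trans (normr_ge0 _) (ub k).
Qed.

Lemma tannery_gap (f : nat -> R ^nat) (g a : R ^nat) K n :
  (K <= n)%N -> (forall k, `|f n k| <= a k) -> (forall k, `|g k| <= a k) ->
  `|\sum_(0 <= k < n) f n k - series g n| <=
    \sum_(0 <= k < K) `|f n k - g k| + 2 * \sum_(K <= k < n) a k.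
Proof.
move=> Kn fa ga; rewrite /series /= -sumrB (big_cat_nat (leq0n K) Kn) /=.
apply: le_trans (ler_normD _ _) _; apply: lerD; first exact: ler_norm_sum.
apply: le_trans (ler_norm_sum _ _ _) _; rewrite mulr_sumr; apply: ler_sum => k _.
by apply: le_trans (ler_normB _ _) _; rewrite mulrDl mul1r lerD.
Qed.

Lemma tannery (f : nat -> R ^nat) (g a : R ^nat) :
  cvgn (series a) -> (forall n k, `|f n k| <= a k) ->
  (forall k, f ^~ k @ \oo --> g k) ->
  cvgn (series g) /\
  (fun n => \sum_(0 <= k < n) f n k) @ \oo --> limn (series g).
Proof.
move=> ca fa fg.
have ga k : `|g k| <= a k.
  rewrite -(cvg_lim _ (cvg_norm (fg k))) //.
  by apply: limr_le; [apply: is_cvg_norm; apply/cvg_ex; exists (g k) | near=> n].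
have a0 k : 0 <= a k by apply: le_trans (normr_ge0 _) (ga k).
have cg := is_cvg_series_dom ga ca; split => //.
set Sa := limn (series a).
have aS n : series a n <= Sa.
  apply: nondecreasing_cvgn_le => //.
  by apply/nondecreasing_seqP => m; rewrite seriesSr lerDl.
suff gap0 : (fun n => \sum_(0 <= k < n) f n k - series g n) @ \oo --> 0.
  have -> : (fun n => \sum_(0 <= k < n) f n k) =
            (fun n => (\sum_(0 <= k < n) f n k - series g n) + series g n).
    by apply: funext => n; rewrite subrK.
  by rewrite -[limn _]add0r; apply: cvgD.
apply/cvgrPdist_lt => e e0; have e30 : 0 < e / 3 by rewrite divr_gt0.
have /cvgrPdist_lt /(_ _ e30) [K _ HK] : series a @ \oo --> Sa by [].
have : (fun n => \sum_(0 <= k < K) `|f n k - g k|) @ \oo --> \sum_(0 <= k < K) 0.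
  apply: cvgn_sum => k; rewrite -(@normr0 _ R) -(subrr (g k)).
  by apply: cvg_norm; apply: cvgB => //; exact: cvg_cst.
rewrite big1 // => /cvgrPdist_lt /(_ _ e30) [N _ HN]; near=> n.
have Kn : (K <= n)%N by near: n; exists K.
have tailK : \sum_(K <= k < n) a k <= Sa - series a K.
  by rewrite lerBrDl -big_cat_nat //= (le_trans _ (aS n)).
have Nn : (N <= n)%N by near: n; exists N.
have eK : Sa - series a K < e / 3.
  by have := HK K (leqnn K); rewrite /= ger0_norm // subr_ge0.
have eN : \sum_(0 <= k < K) `|f n k - g k| < e / 3.
  by have := HN n Nn; rewrite /= sub0r normrN ger0_norm // sumr_ge0.
rewrite /= sub0r normrN; apply: le_lt_trans (tannery_gap Kn (fa n) ga) _.
lra.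
Unshelve. all: by end_near.
Qed.
End series_facts.

Section step_sizes.
Variables (R : realType) (c gamma : R).
Hypotheses (c01 : 0 < c < 1) (gamma_gt0 : 0 < gamma).
Notation lm := (lam c gamma).

Lemma lam_gt0 k : 0 < lm k.
Proof. by rewrite /lam mulr_gt0 ?expR_gt0 //; case/andP: c01. Qed.

Lemma lam_lt1 k : lm k < 1.
Proof.
case/andP: c01 => c0 c1; apply: le_lt_trans c1.
by rewrite /lam -[leRHS]mulr1 ler_pM2l // expR_le1 oppr_le0 mulr_ge0 ?ler0n ?ltW.
Qed.

Lemma subr_lam_ge0 k : 0 <= 1 - lm k.
Proof. by rewrite subr_ge0 ltW // lam_lt1. Qed.

Lemma subr_lam_le1 k : 1 - lm k <= 1.
Proof. by rewrite lerBlDr lerDl ltW // lam_gt0. Qed.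

Lemma is_cvg_series_lam : cvgn (series lm).
Proof.
have -> : lm = geometric c (expR (- gamma)).
  by apply: funext => k; rewrite /lam /= -expRM_natr mulNr.
by apply: is_cvg_geometric_series; rewrite gtr0_norm ?expR_gt0 // expR_lt1 oppr_lt0.
Qed.

Variable Tf : nat.
Notation PP := (Ppart c gamma Tf).

Lemma Ppart_recr k0 n : (maxn k0 Tf <= n)%N -> PP k0 n.+1 = PP k0 n * (1 - lm n).
Proof. by move=> h; rewrite /Ppart big_nat_recr. Qed.

Lemma Ppart_empty k0 n : (n <= maxn k0 Tf)%N -> PP k0 n = 1.
Proof. by move=> h; rewrite /Ppart big_geq. Qed.

Lemma Ppart_ge0 k0 n : 0 <= PP k0 n.
Proof. by apply: prodr_ge0 => k _; exact: subr_lam_ge0. Qed.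

Lemma Ppart_le1 k0 n : PP k0 n <= 1.
Proof. by apply: prodr_ile1 => k _; rewrite subr_lam_ge0 subr_lam_le1. Qed.

Lemma cvg_Ppart k0 : PP k0 @ \oo --> Plam c gamma Tf k0.
Proof.
apply: nonincreasing_is_cvgn; last by exists 0 => _ [n _ <-]; exact: Ppart_ge0.
apply/nonincreasing_seqP => n; have [h|h] := leqP (maxn k0 Tf) n.
  by rewrite Ppart_recr // ler_piMr ?Ppart_ge0 ?subr_lam_le1.
by rewrite !Ppart_empty // ltnW.
Qed.

Lemma Plam_ge0 k0 : 0 <= Plam c gamma Tf k0.
Proof.
by apply: limr_ge; [exact: cvg_Ppart | near=> n; exact: Ppart_ge0].
Unshelve. all: by end_near.
Qed.

Lemma Plam_le1 k0 : Plam c gamma Tf k0 <= 1.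
Proof.
by apply: limr_le; [exact: cvg_Ppart | near=> n; exact: Ppart_le1].
Unshelve. all: by end_near.
Qed.

Definition tail_weight k : R := lm (k + Tf) * Plam c gamma Tf (k + Tf).+1.

Lemma is_cvg_series_lam_shift : cvgn (series (fun k => lm (k + Tf))).
Proof. by apply/cvg_ex; eexists; apply: cvg_series_shiftn; exact: is_cvg_series_lam. Qed.

Lemma is_cvg_series_tail_weight : cvgn (series tail_weight).
Proof.
apply: is_cvg_series_dom is_cvg_series_lam_shift => k.
have lm0 : 0 <= lm (k + Tf) by exact/ltW/lam_gt0.
by rewrite normrM !ger0_norm ?Plam_ge0 // ler_piMr ?Plam_le1.
Qed.

End step_sizes.

Lemma Plam_le_Tf (R : realType) (c gamma : R) Tf k0 :
  (k0 <= Tf)%N -> Plam c gamma Tf k0 = Plam c gamma Tf Tf.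
Proof. by move=> h; rewrite /Plam /Ppart (maxn_idPr h) maxnn. Qed.

Section tail_terms.
Variables (R : realType) (L M : nat) (E : rel 'I_(L + M)).
Variables (al : 'I_L -> 'I_(L + M) -> nat -> R) (c gamma : R) (Tf : nat).
Hypotheses (c01 : 0 < c < 1) (gamma_gt0 : 0 < gamma).
Variable x0 : 'cV[R]_L.
Notation lm := (lam c gamma).
Notation QP := (Qprod E al c gamma).
Notation xLt := (xLterm E al c gamma Tf x0).
Notation rho := (tail_weight c gamma Tf).

Lemma Qprod_empty k0 n : (n <= k0)%N -> QP k0 n = 1%:M.
Proof. by case: n => //= n h; rewrite leqNgt h. Qed.

Lemma xLterm_shift j k : xLt j (k + Tf) = x0 j ord0 * rho k.
Proof.
rewrite /xLterm /tail_weight /Q (maxn_idPl _); last by rewrite ltnW // ltnS leq_addl.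
by rewrite Qprod_empty // mul1mx mulrC [_ * lm _]mulrC.
Qed.

Lemma series_xLterm_shift j : (fun k => xLt j (k + Tf)) = x0 j ord0 *: rho.
Proof. by apply: funext => k; rewrite xLterm_shift. Qed.

Lemma is_cvg_series_xLterm j : cvgn (series (xLt j)).
Proof.
apply: (@is_cvg_series_unshiftn _ _ Tf); rewrite series_xLterm_shift.
by apply: is_cvg_seriesZ; exact: (is_cvg_series_tail_weight c01 gamma_gt0).
Qed.

End tail_terms.

Section dynamics.
Variables (R : realType) (L M : nat) (E : rel 'I_(L + M)).
Variables (al : 'I_L -> 'I_(L + M) -> nat -> R) (x : 'I_(L + M) -> nat -> R).
Variables (c gamma : R).
Hypothesis E_irrefl : forall i, ~~ E i i.
Hypothesis x_step : forall i t,
  x (legit M i) t.+1 =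
    lam c gamma t * x (legit M i) 0
    + (1 - lam c gamma t) *
      \sum_(j : 'I_(L + M) | E (legit M i) j || (j == legit M i))
         wgt E al i j t * x j t.

Notation lm := (lam c gamma).
Notation QP := (Qprod E al c gamma).
Notation W := (WL E al).
Notation WM := (WM E al).

Definition stateL t : 'cV[R]_L := \col_(i < L) x (legit M i) t.
Definition stateM t : 'cV[R]_M := \col_(j < M) x (malic L j) t.

Lemma wgt_notin i j t : ~~ E (legit M i) j -> j != legit M i -> wgt E al i j t = 0.
Proof. by move=> nE nl; rewrite /wgt (negbTE nl) /wgt_off /Ntr inE (negbTE nE). Qed.

Lemma wgt_off_ge0 i j t : 0 <= wgt_off E al i j t.
Proof. by rewrite /wgt_off; case: ifP => // _; rewrite divr_ge0 ?ler0n. Qed.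

Lemma stateL_step t : stateL t.+1 =
  lm t *: stateL 0 + (1 - lm t) *: (W t *m stateL t + WM t *m stateM t).
Proof.
apply/matrixP => i j; rewrite !mxE x_step; congr (_ + _ * _).
under [X in _ = X + _]eq_bigr do rewrite !mxE.
under [X in _ = _ + X]eq_bigr do rewrite !mxE.
rewrite big_mkcond big_split_ord /=; congr (_ + _); apply: eq_bigr => k _;
  case: ifP => // /negbT; rewrite negb_or => /andP[nE nl].
  by rewrite wgt_notin ?mul0r.
by rewrite wgt_notin ?mul0r.
Qed.

Lemma stateL_unroll n : stateL n = QP 0 n *m stateL 0 +
  \sum_(k < n) QP k.+1 n *m (lm k *: stateL 0 + (1 - lm k) *: (WM k *m stateM k)).
Proof.
elim: n => [|n IH]; first by rewrite big_ord0 addr0 mul1mx.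
rewrite stateL_step IH big_ord_recr /= ltnn mul1mx.
under [X in _ = _ + (X + _)]eq_bigr => k _ do rewrite ltn_ord.
rewrite !mulmxDr mulmx_sumr !scalerDr -!scalemxAl -!mulmxA scaler_sumr.
under [X in _ = _ + (X + _)]eq_bigr => k _ do rewrite -!scalemxAl -!mulmxA.
by rewrite [LHS]addrC -!addrA [_ + lm n *: _]addrC.
Qed.

Lemma sum_wgt_off_split i t :
  \sum_(k : 'I_(L + M) | E (legit M i) k) wgt_off E al i k t =
  \sum_(k < L | E (legit M i) (legit M k)) wgt_off E al i (legit M k) t +
  \sum_(k < M | E (legit M i) (malic L k)) wgt_off E al i (malic L k) t.
Proof. by rewrite big_mkcond big_split_ord /= -!big_mkcond. Qed.

(* Equality of the diagonal entries forces the trust mass put on malicious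
   neighbours to vanish, since the legitimate off-diagonal entries already agree. *)
Lemma sum_wgt_off_malic_eq0 i t : W t = Wbar R E ->
  \sum_(k < M | E (legit M i) (malic L k)) wgt_off E al i (malic L k) t = 0.
Proof.
move=> WE; have Wik k : W t i k = Wbar R E i k by rewrite WE.
have legit_off :
    \sum_(k < L | E (legit M i) (legit M k)) wgt_off E al i (legit M k) t =
    \sum_(k < L | E (legit M i) (legit M k)) 1 / (nbL E i).+1%:R.
  apply: eq_bigr => k Eik.
  have ki : k != i by apply: contraTneq Eik => ->; rewrite E_irrefl.
  by have := Wik k; rewrite !mxE /wgt /legit eq_lshift (negbTE ki) -/(legit M k) Eik.
have := Wik i; rewrite !mxE !eqxx /wgt eqxx sum_wgt_off_split legit_off.
by move=> /eqP; lra.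
Qed.

Lemma WM_eq0 t : W t = Wbar R E -> WM t = 0.
Proof.
move=> WE; apply/matrixP => i j; rewrite !mxE /wgt.
rewrite (negbTE (_ : malic L j != legit M i)); last by rewrite eq_rlshift.
have [Eij|nEij] := boolP (E (legit M i) (malic L j)); last first.
  by rewrite /wgt_off /Ntr inE (negbTE nEij).
by apply: (psumr_eq0P _ (sum_wgt_off_malic_eq0 i WE)) => // k _; exact: wgt_off_ge0.
Qed.

Variable Tf : nat.
Hypothesis W_stable : stable_from E al Tf.
Notation PP := (Ppart c gamma Tf).
Notation Wb := (Wbar R E).
Notation rho := (tail_weight c gamma Tf).
Notation x0 := (stateL 0).

Lemma stateL_step_stable t : (Tf <= t)%N ->
  stateL t.+1 = lm t *: x0 + (1 - lm t) *: (Wb *m stateL t).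
Proof. by move=> h; rewrite stateL_step WM_eq0 W_stable // mul0mx addr0. Qed.

Lemma stateL_unroll_stable n :
  stateL (n + Tf) = PP Tf (n + Tf) *: (Wb ^+ n *m stateL Tf) +
  \sum_(k < n) (lm (k + Tf) * PP (k + Tf).+1 (n + Tf)) *: (Wb ^+ (n - k.+1) *m x0).
Proof.
have WbX m (y : 'cV[R]_L) : Wb *m (Wb ^+ m *m y) = Wb ^+ m.+1 *m y.
  by rewrite mulmxA exprS mulmxE.
elim: n => [|n IH].
  by rewrite add0n big_ord0 addr0 Ppart_empty ?maxnn // expr0 mul1mx scale1r.
rewrite addSn stateL_step_stable ?leq_addl // IH big_ord_recr /= subnn expr0 mul1mx.
rewrite [PP (n + Tf).+1 _]Ppart_empty ?leq_maxl // [PP Tf _.+1]Ppart_recr ?maxnn ?leq_addl //.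
rewrite mulmxDr mulmx_sumr scalerDr scaler_sumr mulr1 -scalemxAr WbX scalerA mulrC.
rewrite addrCA; congr (_ + _); rewrite addrC; congr (_ + _).
apply: eq_bigr => k _; rewrite -scalemxAr scalerA Ppart_recr; last first.
  by rewrite geq_max -addSn leq_add2r ltn_ord leq_addl.
by rewrite subSS WbX subnSK ?ltn_ord //; congr (_ *: _); ring.
Qed.

Hypotheses (c01 : 0 < c < 1) (gamma_gt0 : 0 < gamma).
Variable v : 'I_L -> R.
Hypothesis Wbar_pow_cvg : forall i j : 'I_L, (fun t => (Wb ^+ t) i j) @ \oo --> v j.

Definition vavg (y : 'cV[R]_L) : R := \sum_j v j * y j ord0.

Lemma cvg_Wbar_pow (y : 'cV[R]_L) i : (fun n => (Wb ^+ n *m y) i ord0) @ \oo --> vavg y.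
Proof. by under eq_cvg do rewrite mxE; apply: cvgn_sum => j; exact: cvgMl. Qed.

Lemma cvg_stateL_shift i : (fun n => x (legit M i) (n + Tf)) @ \oo -->
  Plam c gamma Tf Tf * vavg (stateL Tf) + vavg x0 * limn (series rho).
Proof.
pose f n k := lm (k + Tf) * PP (k + Tf).+1 (n + Tf) * (Wb ^+ (n - k.+1) *m x0) i ord0.
have x_unroll n : x (legit M i) (n + Tf) =
    PP Tf (n + Tf) * (Wb ^+ n *m stateL Tf) i ord0 + \sum_(0 <= k < n) f n k.
  have := congr1 (fun A : 'cV[R]_L => A i ord0) (stateL_unroll_stable n).
  rewrite /= mxE => ->; rewrite !mxE summxE big_mkord; congr (_ + _).
  by apply: eq_bigr => k _; rewrite /f !mxE.
have [C WbC] : exists C, forall m, `|(Wb ^+ m *m x0) i ord0| <= C.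
  have [C hC] := cvg_has_ub (cvgP _ (@cvg_Wbar_pow x0 i)).
  by exists C => m; apply: hC; exists m.
have lm0 k : 0 <= lm k by exact/ltW/lam_gt0.
have f_dom n k : `|f n k| <= C * lm (k + Tf).
  rewrite /f normrM (normrM (lm _)) ger0_norm // [C * _]mulrC -mulrA ler_wpM2l //.
  by rewrite -[C]mul1r ler_pM // ger0_norm ?Ppart_ge0 ?Ppart_le1.
have f_cvg k : f ^~ k @ \oo --> vavg x0 * rho k.
  rewrite -(cvg_shiftn k.+1) [_ * rho k]mulrC.
  have -> : [sequence f (n + k.+1)%N k]_n = (fun n =>
      lm (k + Tf) * PP (k + Tf).+1 (n + (k.+1 + Tf)) * (Wb ^+ n *m x0) i ord0).
    by apply: funext => n; rewrite /f /= addnK addnA.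
  apply: cvgM; last exact: cvg_Wbar_pow.
  by apply: cvgMr; rewrite (cvg_shiftn _ (PP (k + Tf).+1)); exact: cvg_Ppart.
have dom_summable : cvgn (series (C *: (fun k => lm (k + Tf)))).
  by apply: is_cvg_seriesZ; exact: (is_cvg_series_lam_shift gamma_gt0).
have [_ cvg_sum_f] := tannery dom_summable f_dom f_cvg.
under eq_cvg do rewrite x_unroll.
have -> : vavg x0 * limn (series rho) = limn (series (vavg x0 *: rho)).
  by rewrite lim_seriesZ //; exact: (is_cvg_series_tail_weight c01 gamma_gt0).
apply: cvgD cvg_sum_f; apply: cvgM; last exact: cvg_Wbar_pow.
by rewrite (cvg_shiftn Tf (PP Tf)); exact: cvg_Ppart.
Qed.

Lemma xtilde_sum j : xtildeL E al c gamma Tf x0 j + xtildeM E al c gamma Tf stateM j =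
  Plam c gamma Tf Tf * stateL Tf j ord0 + x0 j ord0 * limn (series rho).
Proof.
have P_Tf k : (k <= Tf)%N -> Plam c gamma Tf k = Plam c gamma Tf Tf by exact: Plam_le_Tf.
have Q_Tf k : (k <= Tf)%N -> Q E al c gamma Tf k = QP k Tf.
  by move=> h; rewrite /Q (maxn_idPr h).
have xLt_cvg : cvgn (series (xLterm E al c gamma Tf x0 j)).
  exact: (is_cvg_series_xLterm c01 gamma_gt0).
rewrite /xtildeL (lim_series_shiftn Tf xLt_cvg) series_xLterm_shift.
rewrite lim_seriesZ; last exact: (is_cvg_series_tail_weight c01 gamma_gt0).
rewrite /xtildeM /series /= /xLterm P_Tf // Q_Tf //.
under eq_big_nat => k /andP[_ hk] do rewrite P_Tf ?Q_Tf //.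
under [X in _ + X = _]eq_big_nat => k /andP[_ hk] do rewrite P_Tf ?Q_Tf //.
rewrite [stateL Tf]stateL_unroll [X in _ = _ * X + _]mxE [X in _ = _ * (_ + X) + _]summxE.
rewrite mulrDr mulr_sumr !big_mkord -[x0 j ord0 *: _]/(x0 j ord0 * limn (series rho)).
suff -> : \sum_(k < Tf) Plam c gamma Tf Tf *
    (QP k.+1 Tf *m (lm k *: x0 + (1 - lm k) *: (WM k *m stateM k))) j ord0 =
  \sum_(k < Tf) Plam c gamma Tf Tf * lm k * (QP k.+1 Tf *m x0) j ord0 +
  \sum_(k < Tf) Plam c gamma Tf Tf * (1 - lm k) *
    (QP k.+1 Tf *m (WM k *m stateM k)) j ord0.
  lra.
rewrite -big_split /=; apply: eq_bigr => k _.
by rewrite mulmxDr -!scalemxAr !mxE; ring.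
Qed.

Lemma cvg_stateL i : (fun t => x (legit M i) t) @ \oo -->
  \sum_j v j * (xtildeL E al c gamma Tf x0 j + xtildeM E al c gamma Tf stateM j).
Proof.
rewrite -(cvg_shiftn Tf); under eq_bigr do rewrite xtilde_sum.
suff -> : \sum_j v j * (Plam c gamma Tf Tf * stateL Tf j ord0 + x0 j ord0 * limn (series rho))
          = Plam c gamma Tf Tf * vavg (stateL Tf) + vavg x0 * limn (series rho).
  exact: cvg_stateL_shift.
rewrite /vavg !mulr_sumr mulr_suml -big_split; apply: eq_bigr => j _ /=; ring.
Qed.

End dynamics.

Lemma exists_is_Tf (R : realType) (L M : nat) (E : rel 'I_(L + M))
    (al : 'I_L -> 'I_(L + M) -> nat -> R) :
  (exists T, stable_from E al T) -> exists Tf, is_Tf E al Tf.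
Proof.
move=> [T HT]; have exT : exists n, `[< stable_from E al n >] by exists T; exact/asboolP.
case: (ex_minnP exT) => Tf /asboolP HTf Tf_min.
by exists Tf; split => // T' /asboolP; exact: Tf_min.
Qed.

Theorem mainTheorem1
  (R : realType) (d : measure_display) (Omega : measurableType d)
  (P : probability Omega R)
  (L M : nat) (E : rel 'I_(L + M))
  (al : 'I_L -> 'I_(L + M) -> nat -> Omega -> R)
  (x : 'I_(L + M) -> nat -> Omega -> R)
  (c gamma eta EL EM : R) (v : 'I_L -> R)
  (HE : forall i, ~~ E i i)
  (Hconn : forall i j : 'I_L, connect (Erel_L E) i j)
  (Hv0 : forall j, 0 <= v j) (Hv1 : \sum_j v j = 1)
  (Hvlim : forall i j : 'I_L, (fun t => (Wbar R E ^+ t) i j) @ \oo --> v j)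
  (Hc : 0 < c < 1) (Hg : 0 < gamma)
  (Hal_meas : forall i j t, E (legit M i) j -> measurable_fun setT (al i j t))
  (Hal_range : forall i j t w, E (legit M i) j -> 0 <= al i j t w <= 1)
  (Hal_indep : forall i j, E (legit M i) j -> indep_seq P (al i j))
  (HmeanL : forall i (j : 'I_L) t, E (legit M i) (legit M j) ->
     (\int[P]_w (al i (legit M j) t w)%:E = (EL + 1/2)%:E)%E)
  (HmeanM : forall i (j : 'I_M) t, E (legit M i) (malic L j) ->
     (\int[P]_w (al i (malic L j) t w)%:E = (EM + 1/2)%:E)%E)
  (HEL : 0 < EL) (HEM : EM < 0)
  (HTf : {ae P, forall w,
     exists T, stable_from E (fun i j t => al i j t w) T})
  (Hdyn : forall i t w,
     x (legit M i) t.+1 w =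
       lam c gamma t * x (legit M i) 0 w
       + (1 - lam c gamma t) *
         \sum_(j : 'I_(L + M) | E (legit M i) j || (j == legit M i))
            wgt E (fun i j t => al i j t w) i j t * x j t w)
  (Hbound : forall i t w, `|x i t w| <= eta) :
  {ae P, forall w,
    let alw := fun i j t => al i j t w in
    let xL0 := \col_(i < L) x (legit M i) 0 w in
    let xMk := fun k => \col_(j < M) x (malic L j) k w in
    exists Tf : nat,
      is_Tf E alw Tf /\
      (forall k0, cvgn (Ppart c gamma Tf k0)) /\
      (forall i, cvgn (series (xLterm E alw c gamma Tf xL0 i))) /\
      (forall i : 'I_L,
        (fun t => x (legit M i) t w) @ \oo -->
          \sum_(j < L) v j * (xtildeL E alw c gamma Tf xL0 j
                              + xtildeM E alw c gamma Tf xMk j))}.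
Proof.
apply: filterS HTf => w /exists_is_Tf [Tf TfP] /=; exists Tf; split => //.
have stable := proj1 TfP; split; first by move=> k0; exact: (cvg_Ppart Hc).
split; first by move=> i; exact: (is_cvg_series_xLterm Hc Hg).
by move=> i; exact: (cvg_stateL HE (fun i t => Hdyn i t w) stable Hc Hg Hvlim).
Qed.
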